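(* Let $\beta$ be a basis set in $x_1,\dots,x_r$ such that every non-standard arrow for $\beta$ is translation-equivalent to $0$. Let $x_j$ be a variable and $h$ a positive integer such that some monomial of $\beta$ is divisible by $x_j^h$, and let $\beta_t=\{m : x_j^h m\in\beta\}$ be the $x_j$-truncation of $\beta$ at height $h$. Then every non-standard arrow for $\beta_t$ is translation-equivalent to $0$ (with respect to $\beta_t$).
   Context: Monomials are identified with exponent vectors. A basis set is a finite nonempty set of monomials closed under taking divisors. For a basis set $\gamma$, an arrow for $\gamma$ is a pair $(\mathbf d,\mathbf j)$ with tail $\mathbf x^{\mathbf d}\notin\gamma$ and head $\mathbf x^{\mathbf j}\in\gamma$, written $c^{\mathbf d}_{\mathbf j}$; its vector is $\mathbf j-\mathbf d$; it is standard if the vector has exactly one negative component and non-standard otherwise. A translation step replaces $(\mathbf d,\mathbf j)$ by $(\mathbf d\pm e_i,\mathbf j\pm e_i)$ provided the result is again an arrow for $\gamma$ (nonnegative exponents, head in $\gamma$, tail not in $\gamma$); $\sim$ is the generated equivalence relation. An arrow $c$ is translation-equivalent to $0$ ($c\sim0$) if $c$ is translation-equivalent to an arrow $(\mathbf d',\mathbf j')$ with, for some $i$, $j'_i=0$, $d'_i\ge1$ and $\mathbf x^{\mathbf d'-e_i}\notin\gamma$. *)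

From mathcomp Require Import all_boot.
From Stdlib Require Import Relation_Operators.
Set Implicit Arguments. Unset Strict Implicit. Unset Printing Implicit Defensive.

(* Monomials in x_1..x_r, identified with exponent vectors. *)
Definition mono (r : nat) := {ffun 'I_r -> nat}.

Definition monoset (r : nat) := mono r -> bool.

Definition basis_set (r : nat) (B : monoset r) : Prop :=
  [/\ exists s : seq (mono r), forall m, B m -> m \in s,
      exists m, B m &
      forall m m' : mono r, B m -> (forall i, m' i <= m i) -> B m'].

(* an arrow c^d_j : tail d not in B, head j in B; we write it as the pair (d, j) *)
Definition arrow (r : nat) (B : monoset r) (c : mono r * mono r) : Prop :=
  ~~ B c.1 /\ B c.2.

(* its vector j - d has exactly one negative component iff standard *)
Definition standard (r : nat) (c : mono r * mono r) : Prop :=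
  #|[set i : 'I_r | c.2 i < c.1 i]| = 1.

Definition nonstandard (r : nat) (c : mono r * mono r) : Prop := ~ standard c.

Definition incr (r : nat) (m : mono r) (i : 'I_r) : mono r :=
  [ffun k => m k + (k == i)].

(* division by x_i (only used when m i >= 1) *)
Definition decr (r : nat) (m : mono r) (i : 'I_r) : mono r :=
  [ffun k => m k - (k == i)].

(* translation step: (d,j) <-> (d + e_i, j + e_i), both being arrows
   (the "-" direction is the reverse of a "+" step, which encodes
   nonnegativity of the exponents). *)
Definition tstep (r : nat) (B : monoset r) (c c' : mono r * mono r) : Prop :=
  arrow B c /\ arrow B c' /\
  exists i : 'I_r,
    (c' = (incr c.1 i, incr c.2 i)) \/ (c = (incr c'.1 i, incr c'.2 i)).

Definition tequiv (r : nat) (B : monoset r) : mono r * mono r -> mono r * mono r -> Prop :=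
  clos_refl_sym_trans _ (@tstep r B).

Definition tequiv0 (r : nat) (B : monoset r) (c : mono r * mono r) : Prop :=
  exists c' : mono r * mono r, tequiv B c c' /\ arrow B c' /\
    exists i : 'I_r, [/\ c'.2 i = 0, 1 <= c'.1 i & ~~ B (decr c'.1 i)].

Definition mulxpow (r : nat) (m : mono r) (j : 'I_r) (h : nat) : mono r :=
  [ffun k => m k + (k == j) * h].

Definition truncation (r : nat) (B : monoset r) (j : 'I_r) (h : nat) : monoset r :=
  fun m => B (mulxpow m j h).

(* Truncating at height h is truncating h times at height 1, and truncating
   preserves divisor-closedness, so it suffices to treat h = 1.  A nonstandard
   arrow c of beta_t lifts to x_j c, a nonstandard arrow of beta, hence one
   translation-equivalent to 0.  Dividing both ends by x_j turns the
   translation path into a path for beta_t, and the witness of ~ 0 at its end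
   into one for beta_t, as long as both ends stay divisible by x_j.  If the
   path leaves this region, either the head becomes x_j-free, and the current
   arrow already witnesses c ~ 0, or the tail b becomes x_j-free.  In the
   latter case b lies outside beta, so lifting only the head gives a second
   nonstandard arrow of beta; dividing only its head by x_j maps its path to 0
   into a path for beta_t, which reaches a witness at the latest when the head
   becomes x_j-free. *)

From Stdlib Require Import Relation_Operators Operators_Properties.
From Stdlib Require Import FunctionalExtensionality.
From mathcomp Require Import all_boot.
From mathcomp Require Import zify.
Set Implicit Arguments. Unset Strict Implicit. Unset Printing Implicit Defensive.

Section Arrows.
Variable r : nat.
Implicit Types (B : monoset r) (m : mono r) (a b c : mono r * mono r).

Definition divisor_closed B :=
  forall m m', B m -> (forall i, m' i <= m i) -> B m'.

Definition nonstandard_tequiv0 B :=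
  forall c, arrow B c -> nonstandard c -> tequiv0 B c.

Definition zero_arrow B c :=
  arrow B c /\ exists i, [/\ c.2 i = 0, 1 <= c.1 i & ~~ B (decr c.1 i)].

Definition descents c := [set i | c.2 i < c.1 i].

Lemma decr_incr m i : decr (incr m i) i = m.
Proof. by apply/ffunP=> k; rewrite !ffunE addnK. Qed.

Lemma incr_decr m i : 1 <= m i -> incr (decr m i) i = m.
Proof. by move=> m_i; apply/ffunP=> k; rewrite !ffunE; case: (eqVneq k i) => [->|] /=; lia. Qed.

Lemma decr_incrC m i k : 1 <= m k -> decr (incr m i) k = incr (decr m k) i.
Proof.
move=> m_k; apply/ffunP=> l; rewrite !ffunE.
by case: (eqVneq l k) => [->|]; case: (_ == i) => /=; lia.
Qed.

Lemma decrC m i k : decr (decr m i) k = decr (decr m k) i.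
Proof. by apply/ffunP=> l; rewrite !ffunE; lia. Qed.

Lemma descents_incr m m' i : descents (incr m i, incr m' i) = descents (m, m').
Proof. by apply/setP=> k; rewrite !inE !ffunE ltn_add2r. Qed.

Lemma nonstandard_descents c c' :
  descents c = descents c' -> nonstandard c -> nonstandard c'.
Proof. by rewrite /nonstandard /standard -!/(descents _) => ->. Qed.

Lemma tstep_sym B a b : tstep B a b -> tstep B b a.
Proof. by move=> [a_arr [b_arr [i step]]]; do 2!split=> //; exists i; tauto. Qed.

Lemma tstepI B a b i :
  arrow B a -> arrow B b -> b = (incr a.1 i, incr a.2 i) -> tstep B a b.
Proof. by move=> a_arr b_arr Eb; split=> //; split=> //; exists i; left. Qed.

Lemma descents_tstep B a b : tstep B a b -> descents a = descents b.
Proof.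
by case: a b => [x y] [x' y'] [_ [_ [i [[-> ->]|[-> ->]]]]]; rewrite descents_incr.
Qed.

Lemma zero_arrow_tequiv0 B c : zero_arrow B c -> tequiv0 B c.
Proof. by exists c; split=> //; apply: rst_refl. Qed.

Lemma tequiv0_tequiv B c c' : tequiv B c c' -> tequiv0 B c' -> tequiv0 B c.
Proof. by move=> cc' [c'' [c'c'' zero]]; exists c''; split=> //; apply: rst_trans c'c''. Qed.

Lemma tequiv0_transport B B' (P : mono r * mono r -> Prop) f :
  (forall a b, tstep B a b -> P a ->
     (P b /\ tstep B' (f a) (f b)) \/ tequiv0 B' (f a)) ->
  (forall a, P a -> zero_arrow B a -> tequiv0 B' (f a)) ->
  forall a, P a -> tequiv0 B a -> tequiv0 B' (f a).
Proof.
move=> f_step f_zero a Pa [c [/(@clos_rst_rst1n _ _ _ _) ac zero]].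
elim: ac zero Pa => [a' zero Pa'|a' b c' a'b _ IH zero Pa']; first exact: f_zero.
have a'b' : tstep B a' b by case: a'b => //; apply: tstep_sym.
case: (f_step _ _ a'b' Pa') => [[Pb fab]|//].
by apply: (tequiv0_tequiv _ (IH zero Pb)); apply: rst_step.
Qed.

Lemma divisor_closed_truncation B j h :
  divisor_closed B -> divisor_closed (truncation B j h).
Proof.
by move=> B_closed m m' Bm le_m'm; apply: B_closed Bm _ => i; rewrite !ffunE leq_add2r.
Qed.

Lemma truncation0 B j : truncation B j 0 = B.
Proof.
apply: functional_extensionality => m; rewrite /truncation; congr B.
by apply/ffunP=> k; rewrite ffunE muln0 addn0.
Qed.

Lemma truncationS B j h :
  truncation B j h.+1 = truncation (truncation B j h) j 1.
Proof.
apply: functional_extensionality => m; rewrite /truncation; congr B.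
by apply/ffunP=> k; rewrite !ffunE; lia.
Qed.

End Arrows.

Section HeightOne.
Variables (r : nat) (B : monoset r) (j : 'I_r).
Hypothesis B_closed : divisor_closed B.
Hypothesis B_nonstd : nonstandard_tequiv0 B.
Implicit Types (m : mono r) (a b c : mono r * mono r).

Local Notation Bt := (truncation B j 1).

Definition unshift c := (decr c.1 j, decr c.2 j).
Definition unshift_head c := (c.1, decr c.2 j).

Lemma truncation1E m : Bt m = B (incr m j).
Proof. by rewrite /truncation; congr B; apply/ffunP=> k; rewrite !ffunE muln1. Qed.

Lemma notin_truncation1 m : ~~ B m -> ~~ Bt m.
Proof.
apply: contra; rewrite truncation1E => B_incr.
by apply: B_closed B_incr _ => i; rewrite ffunE leq_addr.
Qed.

Lemma arrow_truncation1 b : ~~ B b.1 -> B (incr b.2 j) -> arrow Bt b.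
Proof. by move=> b1 b2; split; [apply: notin_truncation1 | rewrite truncation1E]. Qed.

Lemma arrow_unshift_head a : arrow B a -> 1 <= a.2 j -> arrow Bt (unshift_head a).
Proof. by case: a => x y [x_out By] yj; apply: arrow_truncation1; rewrite /= ?incr_decr. Qed.

Lemma arrow_unshift a :
  arrow B a -> 1 <= a.1 j -> 1 <= a.2 j -> arrow Bt (unshift a).
Proof. by move=> [a1 a2] a1j a2j; split; rewrite truncation1E /= incr_decr. Qed.

Lemma tstep_unshift_head a b : tstep B a b -> 1 <= a.2 j ->
  (1 <= b.2 j /\ tstep Bt (unshift_head a) (unshift_head b))
  \/ tequiv0 Bt (unshift_head a).
Proof.
case: a b => [x y] [x' y'] [a_arr [b_arr [i [[Ex' Ey']|[Ex Ey]]]]] /= yj; subst.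
  have y'j : 1 <= incr y i j by rewrite ffunE; lia.
  left; split=> //; apply: (tstepI (i := i)); try exact: arrow_unshift_head.
  by rewrite /unshift_head /= decr_incrC.
have [y'j | y'j0] := leqP 1 (y' j).
  left; split=> //; apply/tstep_sym/(tstepI (i := i)); try exact: arrow_unshift_head.
  by rewrite /unshift_head /= decr_incrC.
have ij : i = j by apply/eqP; move: yj; rewrite ffunE eq_sym; case: eqP; lia.
subst i; right; apply: zero_arrow_tequiv0; split; first exact: arrow_unshift_head.
exists j; rewrite /= decr_incr ffunE eqxx; split; [lia | lia |].
by rewrite decr_incr; apply: notin_truncation1; case: b_arr.
Qed.

Lemma zero_arrow_unshift_head a :
  1 <= a.2 j -> zero_arrow B a -> zero_arrow Bt (unshift_head a).
Proof.
move=> a2j [a_arr [i [a2i a1i a1i_out]]]; split; first exact: arrow_unshift_head.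
have ij : i != j by apply: contraTneq a2j => <-; rewrite a2i.
by exists i; split=> //=; [rewrite ffunE (negbTE ij) subn0 | apply: notin_truncation1].
Qed.

Lemma tequiv0_truncation1_tail_notin x y : arrow Bt (x, y) -> nonstandard (x, y) ->
  ~~ B x -> x j <= y j -> tequiv0 Bt (x, y).
Proof.
move=> [_ By] xy_ns Bx xy_j.
have lift_ns : nonstandard (x, incr y j).
  apply: nonstandard_descents xy_ns; apply/setP=> k; rewrite !inE ffunE /=.
  by case: (eqVneq k j) => [->|] /=; lia.
have lift_arr : arrow B (x, incr y j) by split; rewrite // -truncation1E.
rewrite -[y](decr_incr _ j) -/(unshift_head (x, incr y j)).
apply: (tequiv0_transport (P := fun a => 1 <= a.2 j)); last 2 first.
- by rewrite /= ffunE eqxx; lia.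
- exact: B_nonstd.
- exact: tstep_unshift_head.
- by move=> a a2j zero; apply/zero_arrow_tequiv0/zero_arrow_unshift_head.
Qed.

Lemma tequiv0_truncation1_exit b : arrow B b -> B (incr b.2 j) -> nonstandard b ->
  b.1 j = 0 \/ b.2 j = 0 -> tequiv0 Bt b.
Proof.
case: b => x y b_arr By b_ns /= xy_j; have [x_out _] := b_arr.
have [xj0 | xj] := eqVneq (x j) 0.
  by apply: tequiv0_truncation1_tail_notin; rewrite ?xj0 //; apply: arrow_truncation1.
apply: zero_arrow_tequiv0; split; first exact: arrow_truncation1.
exists j; split=> /=; [lia | lia |].
by rewrite truncation1E incr_decr ?lt0n.
Qed.

Lemma tstep_unshift a b : tstep B a b -> [/\ nonstandard a, 1 <= a.1 j & 1 <= a.2 j] ->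
  ([/\ nonstandard b, 1 <= b.1 j & 1 <= b.2 j] /\ tstep Bt (unshift a) (unshift b))
  \/ tequiv0 Bt (unshift a).
Proof.
case: a b => [x y] [x' y'] ab /= [a_ns xj yj].
have b_ns := nonstandard_descents (descents_tstep ab) a_ns.
case: ab => [a_arr [b_arr [i [[Ex' Ey']|[Ex Ey]]]]]; subst.
  have [x'j y'j] : 1 <= incr x i j /\ 1 <= incr y i j by rewrite !ffunE; lia.
  left; split=> //; apply: (tstepI (i := i)); try exact: arrow_unshift.
  by rewrite /unshift /= !decr_incrC.
have [/andP [x'j y'j] | x'y'j] := boolP ((1 <= x' j) && (1 <= y' j)).
  left; split=> //; apply/tstep_sym/(tstepI (i := i)); try exact: arrow_unshift.
  by rewrite /unshift /= !decr_incrC.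
have ij : i = j.
  apply/eqP; apply: contraR x'y'j => ij.
  by move: xj yj; rewrite !ffunE eq_sym (negbTE ij) !addn0 => -> ->.
subst i; right; rewrite /unshift /= !decr_incr.
apply: tequiv0_truncation1_exit => //; first by case: a_arr.
by move: x'y'j; rewrite negb_and -!eqn0Ngt => /orP [] /eqP; [left | right].
Qed.

Lemma zero_arrow_unshift a :
  1 <= a.1 j -> 1 <= a.2 j -> zero_arrow B a -> zero_arrow Bt (unshift a).
Proof.
move=> a1j a2j [a_arr [i [a2i a1i a1i_out]]]; split; first exact: arrow_unshift.
have ij : i != j by apply: contraTneq a2j => <-; rewrite a2i.
exists i; rewrite /= !ffunE (negbTE ij) !subn0; split=> //.
by rewrite truncation1E decrC incr_decr // ffunE [j == i]eq_sym (negbTE ij) subn0.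
Qed.

Lemma nonstandard_tequiv0_truncation1 : nonstandard_tequiv0 Bt.
Proof.
move=> [x y] c_arr c_ns.
have lift_ns : nonstandard (incr x j, incr y j).
  by apply: nonstandard_descents c_ns; rewrite descents_incr.
rewrite -[x](decr_incr _ j) -[y](decr_incr _ j) -/(unshift (incr x j, incr y j)).
apply: (tequiv0_transport
  (P := fun a => [/\ nonstandard a, 1 <= a.1 j & 1 <= a.2 j])); last 2 first.
- by split; rewrite //= ffunE eqxx; lia.
- by apply: B_nonstd => //; case: c_arr; rewrite !truncation1E.
- exact: tstep_unshift.
- by move=> a [_ a1j a2j] zero; apply/zero_arrow_tequiv0/zero_arrow_unshift.
Qed.

End HeightOne.

Theorem theorem7p2 (r : nat) (B : monoset r) (j : 'I_r) (h : nat) :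
  basis_set B ->
  (forall c, arrow B c -> nonstandard c -> tequiv0 B c) ->
  0 < h ->
  (exists m : mono r, B m /\ h <= m j) ->
  forall c, arrow (truncation B j h) c -> nonstandard c ->
    tequiv0 (truncation B j h) c.
Proof.
(* [0 < h] and the monomial divisible by [x_j^h] only make the truncation a
   basis set again; the arrow property holds without them. *)
move=> [_ _ B_closed] B_nonstd _ _.
have [_ Bh_nonstd] :
    divisor_closed (truncation B j h) /\ nonstandard_tequiv0 (truncation B j h).
  elim: h => [|h [Bh_closed Bh_nonstd]]; first by rewrite truncation0.
  rewrite truncationS; split; first exact: divisor_closed_truncation.
  exact: nonstandard_tequiv0_truncation1.
exact: Bh_nonstd.
Qed.
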